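(* Let $G=(N,A)$ be an $s$-$t$ DAG and let $X$ be a sequence of nodes of $G$. The following statements are equivalent: (1) $X$ is safe for path covers of $G$. (2) There is a node $u\in N$ such that every $s$-$t$ path of $G$ containing $u$ contains $X$ (as a subsequence). (3) There is a node $v\in N$ such that $X$ is contained in the sequence obtained as the concatenation of the sequence of $s$-$v$ cutnodes with the sequence of $v$-$t$ cutnodes.
   Context: An $s$-$t$ DAG is a directed acyclic graph with a unique source $s$ and a unique sink $t$ such that every node is reachable from $s$ and every node reaches $t$. A sequence of nodes $X=u_1,\dots,u_\ell$ is a list of nodes such that there is a $u_i$-$u_{i+1}$ path for all $1\le i\le \ell-1$ (in particular a path is a sequence). $X$ is contained in (is a subsequence of) a sequence $Y$ if every node of $X$ occurs in $Y$. A path cover of $G$ is a set $P$ of $s$-$t$ paths such that every node of $G$ lies on some path of $P$. A sequence $X$ is safe (for path covers) if for every path cover $P$ of $G$, $X$ is a subsequence of some path of $P$; by convention, if no $s$-$t$ path contains $X$, then $X$ is unsafe. A node $w$ is a $u$-$v$ cutnode if every $u$-$v$ path contains $w$ (in particular $u$ and $v$ are $u$-$v$ cutnodes); the $u$-$v$ cutnodes appear in the same order on every $u$-$v$ path, giving the sequence of $u$-$v$ cutnodes. The concatenation of a sequence ending in $v$ with a sequence starting at $v$ lists the first sequence followed by the second with the repeated occurrence of $v$ removed. *)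

From mathcomp Require Import all_boot.
Set Implicit Arguments. Unset Strict Implicit. Unset Printing Implicit Defensive.

Section Defs.
Variables (T : finType) (e : rel T).

Definition is_path (u v : T) (l : seq T) : bool :=
  if l is x :: p then [&& x == u, path e x p & last x p == v] else false.

Definition acyclic : Prop := forall x p, ~ path e x (rcons p x).

Definition is_source (x : T) : Prop := forall y, ~~ e y x.
Definition is_sink (x : T) : Prop := forall y, ~~ e x y.

Definition st_DAG (s t : T) : Prop :=
  [/\ acyclic,
      is_source s /\ (forall x, is_source x -> x = s),
      is_sink t /\ (forall x, is_sink x -> x = t),
      (forall x, connect e s x) &
      (forall x, connect e x t)].

Definition is_sequence (X : seq T) : bool := sorted (connect e) X.

(* X is contained in (is a subsequence of) Y: every node of X occurs in Y. *)
Definition contained (X Y : seq T) : Prop := {subset X <= Y}.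

Definition path_cover (s t : T) (P : seq (seq T)) : Prop :=
  (forall l, l \in P -> is_path s t l) /\ (forall x, exists2 l, l \in P & x \in l).

(* Safety, with the convention that X is unsafe if no s-t path contains X. *)
Definition safe (s t : T) (X : seq T) : Prop :=
  (exists l, is_path s t l /\ contained X l) /\
  (forall P, path_cover s t P -> exists2 l, l \in P & contained X l).

Definition cutnode (u v w : T) : Prop := forall l, is_path u v l -> w \in l.

Definition cutnode_seq (u v : T) (C : seq T) : Prop :=
  exists2 l, is_path u v l &
    subseq C l /\ (forall w, w \in C <-> cutnode u v w).

(* concatenation of a sequence ending in v with one starting at v,
   with the repeated occurrence of v removed *)
Definition concat_seq (A B : seq T) : seq T := A ++ behead B.

End Defs.

From Stdlib Require Import Classical ClassicalEpsilon.
From mathcomp Require Import all_boot.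

(* Containment of sequences is mere membership. *)

Set Implicit Arguments. Unset Strict Implicit. Unset Printing Implicit Defensive.

Section Paths.
Variables (T : finType) (e : rel T).

Lemma connect_is_path x y : connect e x y -> exists l, is_path e x y l.
Proof. by move/connectP=> [p xp ->]; exists (x :: p); rewrite /= eqxx xp eqxx. Qed.

Lemma is_path_cons u v l : is_path e u v l -> exists p, l = u :: p.
Proof. by case: l => [|x p] //= /and3P [/eqP -> _ _]; exists p. Qed.

Lemma is_path_mem_head u v l : is_path e u v l -> u \in l.
Proof. by case/is_path_cons=> p ->; rewrite mem_head. Qed.

Lemma is_path_mem_last u v l : is_path e u v l -> v \in l.
Proof. by case: l => [|x p] //= /and3P [_ _ /eqP <-]; rewrite mem_last. Qed.

Lemma is_path_cat x y z p q :
  is_path e x y (x :: p) -> is_path e y z (y :: q) -> is_path e x z (x :: p ++ q).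
Proof.
rewrite /= => /and3P [_ xp /eqP lastp] /and3P [_ yq /eqP lastq].
by rewrite eqxx cat_path xp lastp yq last_cat lastp lastq eqxx.
Qed.

Lemma is_path_split u v l w : is_path e u v l -> w \in l ->
  exists p q, [/\ l = u :: p ++ q, is_path e u w (u :: p) & is_path e w v (w :: q)].
Proof.
case: l => [|x p] //= /and3P [/eqP -> up /eqP lastp].
rewrite inE => /orP [/eqP -> | wp].
  by exists [::], p; rewrite /= eqxx up lastp eqxx.
case/splitPr: wp up lastp => p1 p2.
rewrite cat_path last_cat /= => /and3P [up1 p1w wp2] lastp.
exists (rcons p1 w), p2; rewrite cat_rcons; split => //.
by rewrite /= eqxx rcons_path up1 last_rcons p1w eqxx.
by rewrite /= eqxx wp2 lastp eqxx.
Qed.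

Lemma is_path_through s t u :
  connect e s u -> connect e u t -> exists2 l, is_path e s t l & u \in l.
Proof.
move=> /connect_is_path [l1 sul1] /connect_is_path [l2 utl2].
have [p1 ?] := is_path_cons sul1; have [p2 ?] := is_path_cons utl2; subst l1 l2.
exists (s :: p1 ++ p2); first exact: is_path_cat sul1 utl2.
by have := is_path_mem_last sul1; rewrite -cat_cons mem_cat => ->.
Qed.

Lemma not_cutnode u v w :
  ~ cutnode e u v w -> exists p, is_path e u v (u :: p) /\ w \notin u :: p.
Proof.
move=> notcut; apply: NNPP => noavoid; apply: notcut => l uvl.
have [p lE] := is_path_cons uvl; rewrite lE in uvl *.
by apply: NNPP => /negP wl; apply: noavoid; exists p.
Qed.

Definition cutnodeb u v w : bool :=
  if excluded_middle_informative (cutnode e u v w) then true else false.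

Lemma cutnodeP u v w : reflect (cutnode e u v w) (cutnodeb u v w).
Proof. by rewrite /cutnodeb; case: excluded_middle_informative => ?; constructor. Qed.

Lemma cutnodeb_head u v : cutnodeb u v u.
Proof. by apply/cutnodeP => l; apply: is_path_mem_head. Qed.

Lemma cutnodeb_last u v : cutnodeb u v v.
Proof. by apply/cutnodeP => l; apply: is_path_mem_last. Qed.

Lemma cutnode_seq_filter u v l :
  is_path e u v l -> cutnode_seq e u v (filter (cutnodeb u v) l).
Proof.
move=> uvl; exists l => //; split; first exact: filter_subseq.
move=> w; rewrite mem_filter; split; first by case/andP=> /cutnodeP.
by move=> cw; rewrite (cw _ uvl) andbT; apply/cutnodeP.
Qed.

End Paths.

Section Safety.
Variables (T : finType) (e : rel T) (s t : T).

Definition forces (u : T) (X : seq T) : Prop :=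
  forall l, is_path e s t l -> u \in l -> contained X l.

Lemma safe_of_forces u X :
  (exists2 l, is_path e s t l & u \in l) -> forces u X -> safe e s t X.
Proof.
move=> [l stl ul] uX; split; first by exists l; split => //; apply: uX.
move=> P [Ppaths Pcover]; have [l' l'P ul'] := Pcover u.
by exists l' => //; apply: uX (Ppaths _ l'P) ul'.
Qed.

Lemma forces_of_safe X : safe e s t X -> exists u, forces u X.
Proof.
case=> _ safeX; apply: NNPP => noforce.
have avoid u : exists l, [/\ is_path e s t l, u \in l & ~ contained X l].
  apply: NNPP => noavoid; apply: noforce; exists u => l stl ul.
  by apply: NNPP => Xl; apply: noavoid; exists l.
have [f favoid] := ClassicalEpsilon.choice _ avoid.
have [|l /mapP [u _ ->]] := safeX [seq f u | u <- enum T].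
  split; first by move=> l /mapP [u _ ->]; case: (favoid u).
  by move=> x; exists (f x); [apply: map_f; rewrite mem_enum | case: (favoid x)].
by case: (favoid u).
Qed.

Lemma forces_of_cutnodes v X :
  (forall x, x \in X -> cutnode e s v x \/ cutnode e v t x) -> forces v X.
Proof.
move=> cutX l stl vl x /cutX.
have [p [q [-> svp vtq]]] := is_path_split stl vl.
rewrite -cat_cons mem_cat => [[/(_ _ svp) -> // | /(_ _ vtq)]].
by rewrite inE => /orP [/eqP -> | ->]; rewrite ?orbT // (is_path_mem_last svp).
Qed.

Lemma cutnodes_of_forces v X :
  forces v X -> forall x, x \in X -> cutnode e s v x \/ cutnode e v t x.
Proof.
move=> vX x xX; apply: NNPP => /not_or_and [].
move=> /not_cutnode [p1 [svp1 xp1]] /not_cutnode [p2 [vtp2 xp2]].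
have vl : v \in s :: p1 ++ p2 by rewrite -cat_cons mem_cat (is_path_mem_last svp1).
have := vX _ (is_path_cat svp1 vtp2) vl x xX.
by rewrite -cat_cons mem_cat (negPf xp1) /= (negPf (contra (@mem_behead _ _ _) xp2)).
Qed.

Lemma concat_cutnode_seqs v :
  connect e s v -> connect e v t ->
  exists C1 C2, [/\ cutnode_seq e s v C1, cutnode_seq e v t C2 &
    forall x, cutnode e s v x \/ cutnode e v t x -> x \in concat_seq C1 C2].
Proof.
move=> /connect_is_path [l1 svl1] /connect_is_path [l2 vtl2].
have [p2 l2E] := is_path_cons vtl2; rewrite l2E in vtl2.
exists (filter (cutnodeb e s v) l1), (filter (cutnodeb e v t) (v :: p2)).
split; try exact: cutnode_seq_filter.
rewrite /concat_seq /= cutnodeb_head /= => x.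
case=> [svx | vtx]; rewrite mem_cat mem_filter.
  by rewrite (introT (cutnodeP e s v x) svx) (svx _ svl1).
move: (vtx _ vtl2); rewrite inE => /orP [/eqP -> | xp2].
  by rewrite cutnodeb_last (is_path_mem_last svl1).
by rewrite mem_filter (introT (cutnodeP e v t x) vtx) xp2 orbT.
Qed.

End Safety.

Theorem theorem1 (T : finType) (e : rel T) (s t : T) (X : seq T) :
  st_DAG e s t -> is_sequence e X ->
  (safe e s t X <->
     exists u : T, forall l, is_path e s t l -> u \in l -> contained X l) /\
  (safe e s t X <->
     exists v : T, exists C1 C2,
       [/\ cutnode_seq e s v C1, cutnode_seq e v t C2 &
           contained X (concat_seq C1 C2)]).
Proof.
case=> _ _ _ from_s to_t _.
have safe_forces : safe e s t X <-> exists u, forces e s t u X.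
  split; first exact: forces_of_safe.
  by case=> u; apply: safe_of_forces; apply: is_path_through.
split => //; rewrite safe_forces; split.
  case=> v vX.
  have [C1 [C2 [svC1 vtC2 concatC]]] := concat_cutnode_seqs (from_s v) (to_t v).
  by exists v, C1, C2; split => // x /(cutnodes_of_forces vX) /concatC.
case=> v [C1 [C2 [[_ _ [_ C1cut]] [_ _ [_ C2cut]] XC]]].
exists v; apply: forces_of_cutnodes => x /XC.
by rewrite mem_cat => /orP [/C1cut | /mem_behead /C2cut]; [left | right].
Qed.
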